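(* Let $n,t$ be integers with $1\le t\le n-3$, and let $P_{n,t}^{++}$ be the graph obtained from the path $v_1v_2\dots v_{n-1}$ by adding a new vertex $u$ and the two edges $uv_t$ and $uv_{t+2}$. Then $\mu_2(P_{n,t}^{++})<4$.
   Context: For a graph $G$ of order $n$, $\mu_1(G)\ge\mu_2(G)\ge\dots\ge\mu_n(G)$ denote the eigenvalues of the Laplacian matrix $L(G)=D(G)-A(G)$. *)

From HB Require Import structures.
From mathcomp Require Import all_boot all_order all_algebra.
From mathcomp Require Import reals.
Set Implicit Arguments. Unset Strict Implicit. Unset Printing Implicit Defensive.
Import Order.TTheory GRing.Theory Num.Theory.
Local Open Scope ring_scope.

Definition gdeg (n : nat) (adj : rel 'I_n) (i : 'I_n) : nat :=
  #|[set j | adj i j]|.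

Definition laplacian (R : realType) (n : nat) (adj : rel 'I_n) : 'M[R]_n :=
  \matrix_(i, j) ((if i == j then (gdeg adj i)%:R else 0) - (adj i j)%:R).

Definition is_spectrum (R : realType) (n : nat) (A : 'M[R]_n) (s : seq R) : Prop :=
  char_poly A = \prod_(x <- s) ('X - x%:P).

(* k-th largest element (1-indexed) of a list of reals: mu_1 >= mu_2 >= ... *)
Definition kth_largest (R : realType) (k : nat) (s : seq R) : R :=
  nth 0 (sort (fun x y : R => y <= x) s) k.-1.

(* The graph P_{n,t}^{++} on 'I_n: vertex v_i (1 <= i <= n-1) is i-1,
   the extra vertex u is n-1.  Path edges v_i v_{i+1}, i.e. a -- a+1 for
   a+1 < n-1, plus edges u v_t (= t-1) and u v_{t+2} (= t+1). *)
Definition Ppp_adj (n t : nat) : rel 'I_n := fun i j =>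
  let a := nat_of_ord i in let b := nat_of_ord j in
  [|| (a.+1 == b) && (b < n.-1),
      (b.+1 == a) && (a < n.-1),
      (a == n.-1) && ((b == t.-1) || (b == t.+1))
    | (b == n.-1) && ((a == t.-1) || (a == t.+1))]%N.

Arguments Ppp_adj n t : clear implicits.
Arguments laplacian R {n} adj.

From mathcomp Require Import all_boot all_order all_algebra.
From mathcomp Require Import reals.
From mathcomp Require Import complex spectral sesquilinear.
From mathcomp Require Import ring zify.
Set Implicit Arguments.
Unset Strict Implicit.
Unset Printing Implicit Defensive.
Import Order.TTheory GRing.Theory Num.Theory.
Local Open Scope ring_scope.
Local Open Scope sesquilinear_scope.
Local Open Scope complex_scope.

(* On vectors x with x_u + x_(v_(t+1)) = 0, the two edges at u contribute
   |x_(v_t) + x_(v_(t+1))|^2 + |x_(v_(t+1)) + x_(v_(t+2))|^2 to the Laplacian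
   form, so summing |a - b|^2 + |a + b|^2 = 2|a|^2 + 2|b|^2 along the path
   v_1 ... v_(n-1) writes 4|x|^2 minus the form as a sum of squares that only
   vanishes at x = 0.  A hyperplane meets the span of any two eigenvectors,
   hence at most one eigenvalue is >= 4 and mu_2 < 4.  Eigenvectors are taken
   in R[i], where the spectral theorem is available. *)

Lemma char_poly_similar (F : fieldType) n (P A : 'M[F]_n) : P \in unitmx ->
  char_poly (invmx P *m A *m P) = char_poly A.
Proof.
move=> Pu; pose Pp := map_mx polyC P; pose Pi := map_mx polyC (invmx P).
have PiPp : Pi *m Pp = 1%:M by rewrite -map_mxM mulVmx // map_mx1.
rewrite /char_poly.
have -> : char_poly_mx (invmx P *m A *m P) = Pi *m char_poly_mx A *m Pp.
  rewrite /char_poly_mx mulmxBr mulmxBl !map_mxM.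
  by rewrite mul_mx_scalar -scalemxAl PiPp -mul_mx_scalar mul1mx.
rewrite !det_mulmx mulrC mulrA -det_mulmx.
by rewrite -map_mxM mulmxV // map_mx1 det1 mul1r.
Qed.

Lemma exists_support2_mul_eq0 (F : fieldType) n (g : 'cV[F]_n)
    (i j : 'I_n) : i != j ->
  exists2 y : 'rV[F]_n, y != 0 &
    y *m g = 0 /\ forall k, k != i -> k != j -> y 0 k = 0.
Proof.
move=> ij; have [gi0 | gi_neq0] := eqVneq (g i 0) 0.
  exists (delta_mx 0 i).
    by apply/negP => /eqP/matrixP/(_ 0 i)/eqP; rewrite !mxE !eqxx oner_eq0.
  split; last by move=> k /negbTE ki _; rewrite mxE ki andbF.
  by rewrite -rowE; apply/matrixP => a b; rewrite !ord1 !mxE.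
exists (g j 0 *: delta_mx 0 i - g i 0 *: delta_mx 0 j).
  apply/negP=> /eqP/matrixP/(_ 0 j); rewrite !mxE !eqxx eq_sym (negbTE ij).
  by rewrite mulr0 mulr1 sub0r => /eqP; rewrite oppr_eq0 (negbTE gi_neq0).
split=> [|k /negbTE ki /negbTE kj].
  rewrite mulmxBl -!scalemxAl -!rowE; apply/matrixP => a b.
  by rewrite !ord1 !mxE mulrC subrr.
by rewrite !mxE ki kj !andbF !mulr0 subr0.
Qed.

Section RealSymmetric.
Variable R : realType.
Local Notation C := R[i].

Lemma realsym_spectral n (M : 'M[R]_n) : M^T = M ->
  exists2 P : 'M[C]_n, P \is unitarymx &
  exists d : 'I_n -> R,
    map_mx (real_complex R) M = P^t* *m diag_mx (\row_k (d k)%:C) *m P /\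
    char_poly M = \prod_k ('X - (d k)%:P).
Proof.
move=> Msym; set A := map_mx (real_complex R) M.
have Aherm : A \is hermsymmx.
  apply: realsym_hermsym; last by apply/mxOverP => i j; rewrite mxE complex_real.
  by apply/is_hermitianmxP; rewrite expr0 scale1r map_mx_id // /A map_trmx Msym.
have /orthomx_spectralP A_eq := hermitian_normalmx Aherm.
have P_unitary := spectral_unitarymx A.
exists (spectralmx A) => //; exists (fun k => complex.Re (spectral_diag A 0 k)).
have -> : \row_k (complex.Re (spectral_diag A 0 k))%:C = spectral_diag A.
  apply/rowP => k; rewrite mxE.
  by have /complex_realP [r ->] := mxOverP (hermitian_spectral_diag_real Aherm) 0 k.
split; first by rewrite -invmx_unitary.
apply: (@map_poly_inj _ _ (real_complex R)).
rewrite map_char_poly -/A {1}A_eq char_poly_similar ?unitarymx_unit //.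
rewrite char_poly_trig ?diag_mx_is_trig // rmorph_prod; apply: eq_bigr => k _.
rewrite mxE eqxx mulr1n rmorphB /= map_polyX map_polyC /=.
by have /complex_realP [r ->] := mxOverP (hermitian_spectral_diag_real Aherm) 0 k.
Qed.

Lemma realsym_spectrum n (M : 'M[R]_n) : M^T = M -> exists s, is_spectrum M s.
Proof.
move=> /realsym_spectral [P _ [d [_ charM]]].
by exists [seq d k | k <- enum 'I_n]; rewrite /is_spectrum big_map big_enum.
Qed.

Lemma diag_form_ge n (d : 'I_n -> R) (c : R) (y : 'rV[C]_n) :
    (forall k, d k < c -> y 0 k = 0) ->
  c%:C * (y *m y^t*) 0 0 <= (y *m diag_mx (\row_k (d k)%:C) *m y^t*) 0 0.
Proof.
move=> y_supp; rewrite mul_mx_diag !mxE mulr_sumr; apply: ler_sum => k _.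
rewrite !mxE; have [dk_lt | c_le_dk] := ltP (d k) c.
  by rewrite y_supp // !mul0r mulr0.
by rewrite mulrAC [_%:C * _]mulrC ler_wpM2l ?mul_conjC_ge0 ?lecR.
Qed.

Lemma realsym_count_spectrum_ge_le1 n (M : 'M[R]_n) (f : 'cV[C]_n) (c : R)
    (s : seq R) : M^T = M -> is_spectrum M s ->
  (forall x : 'rV[C]_n, x != 0 -> x *m f = 0 ->
     (x *m map_mx (real_complex R) M *m x^t*) 0 0 < c%:C * (x *m x^t*) 0 0) ->
  (count (fun r => (c <= r)%R) s <= 1)%N.
Proof.
move=> /realsym_spectral [P P_unitary [d [M_eq charM]]] spec_s form_lt.
have /permP -> : perm_eq s [seq d k | k <- enum 'I_n].
  by apply: prod_XsubC_eq; rewrite -spec_s charM big_map big_enum.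
rewrite count_map -sum1_count big_enum_cond sum1_card leqNgt; apply/negP.
move=> /card_gt1P [i [j [/= c_le_di c_le_dj ij]]].
have [y y_neq0 [yPf y_supp]] := exists_support2_mul_eq0 (P *m f) ij.
have PPt : P *m P^t* = 1%:M by apply/unitarymxP.
have yP_neq0 : y *m P != 0.
  by apply: contraNneq y_neq0 => yP0; rewrite -[y]mulmx1 -PPt mulmxA yP0 mul0mx.
have yP_orth : y *m P *m f = 0 by rewrite -mulmxA yPf.
have := form_lt _ yP_neq0 yP_orth.
rewrite M_eq trmx_mul map_mxM !mulmxA -[y *m P *m P^t*]mulmxA PPt mulmx1.
rewrite -[y *m _ *m P *m P^t*]mulmxA PPt mulmx1.
move/lt_geF; rewrite diag_form_ge // => k dk_lt.
by apply: y_supp; apply: contraTneq dk_lt => ->; rewrite -leNgt.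
Qed.
End RealSymmetric.

Lemma kth_largest2_lt (R : realType) (c : R) (s : seq R) : (2 <= size s)%N ->
  (count (fun r => (c <= r)%R) s <= 1)%N -> kth_largest 2 s < c.
Proof.
rewrite /kth_largest; set ge := fun x y : R => y <= x.
have l_perm : perm_eq (sort ge s) s by rewrite perm_sort.
have : sorted ge (sort ge s) by apply: sort_sorted => x y; exact: le_total.
rewrite -(perm_size l_perm) -(permP l_perm).
case: (sort ge s) => [|a [|b l]] //= /andP[b_le_a _] _.
rewrite ltNge; apply: contraTN => c_le_b.
by rewrite (le_trans c_le_b b_le_a) c_le_b.
Qed.

Section Laplacian.
Variable R : realType.
Local Notation C := R[i].
Local Notation rc := (real_complex R).

Lemma laplacian_sym n (adj : rel 'I_n) : symmetric adj ->
  (laplacian R adj)^T = laplacian R adj.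
Proof.
move=> adj_sym; apply/matrixP => a b.
by rewrite !mxE adj_sym eq_sym; case: eqVneq => [->|].
Qed.

Lemma double_laplacian_form n (adj : rel 'I_n) (x : 'rV[C]_n) : symmetric adj ->
  2 * (x *m map_mx rc (laplacian R adj) *m x^t*) 0 0 =
  \sum_a \sum_b (adj a b)%:R * `|x 0 a - x 0 b| ^+ 2.
Proof.
move=> adj_sym; pose h a b := x 0 a * (x 0 b)^*.
have deg a : (gdeg adj a)%:R = \sum_b (adj a b)%:R :> C.
  rewrite /gdeg cardsE -sum1_card natr_sum big_mkcond /=.
  by apply: eq_bigr => b _; rewrite -topredE /=; case: (adj a b).
have entry a b : map_mx rc (laplacian R adj) a b =
    (a == b)%:R * (gdeg adj a)%:R - (adj a b)%:R.
  by rewrite !mxE rmorphB /=; case: eqP; rewrite ?mul1r ?mul0r !rmorph_nat.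
have form : (x *m map_mx rc (laplacian R adj) *m x^t*) 0 0 =
    \sum_a \sum_b (adj a b)%:R * (h a a - h a b).
  rewrite mxE; under eq_bigr => j _ do rewrite !mxE mulr_suml.
  rewrite exchange_big /=; apply: eq_bigr => a _.
  under eq_bigr => b _ do rewrite entry mulrBr mulrBl.
  under [RHS]eq_bigr => b _ do rewrite mulrBr.
  rewrite !sumrB (bigD1 a) //= big1 => [|b /negbTE ab]; last first.
    by rewrite eq_sym ab mul0r mulr0 mul0r.
  rewrite eqxx mul1r addr0 -mulr_suml -deg.
  by congr (_ - _); [rewrite /h; ring | apply: eq_bigr => b _; rewrite /h; ring].
have form_sym : (x *m map_mx rc (laplacian R adj) *m x^t*) 0 0 =
    \sum_a \sum_b (adj a b)%:R * (h b b - h b a).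
  rewrite form exchange_big /=; apply: eq_bigr => a _.
  by apply: eq_bigr => b _; rewrite adj_sym.
rewrite mulr2n mulrDl mul1r {1}form form_sym -big_split /=.
apply: eq_bigr => a _; rewrite -big_split /=; apply: eq_bigr => b _.
by rewrite normCK rmorphB /= /h; ring.
Qed.

Lemma sum_count_edges n (E : seq (nat * nat)) (h : 'I_n.+1 -> 'I_n.+1 -> C) :
    all (fun e => (e.1 <= n) && (e.2 <= n))%N E ->
  \sum_a \sum_b (count (pred1 (val a, val b)) E)%:R * h a b =
  \sum_(e <- E) h (inord e.1) (inord e.2).
Proof.
elim: E => [_|e E IH /andP[/andP[e1_lt e2_lt] E_lt]].
  by rewrite big_nil big1 // => a _; rewrite big1 // => b _; rewrite mul0r.
have e_eq (a b : 'I_n.+1) :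
    (e == (val a, val b)) = (a == inord e.1) && (b == inord e.2).
  by rewrite -!(inj_eq val_inj) /= !inordK // [e]surjective_pairing xpair_eqE.
have single :
    \sum_a \sum_b (e == (val a, val b))%:R * h a b = h (inord e.1) (inord e.2).
  rewrite (bigD1 (inord e.1)) //= [X in _ + X]big1 => [|a /negbTE a_ne].
    rewrite (bigD1 (inord e.2)) //= big1 => [|b /negbTE b_ne].
      by rewrite e_eq !eqxx mul1r !addr0.
    by rewrite e_eq b_ne andbF mul0r.
  by rewrite big1 // => b _; rewrite e_eq a_ne mul0r.
rewrite big_cons -IH // -single -big_split /=; apply: eq_bigr => a _.
rewrite -big_split /=; apply: eq_bigr => b _.
by rewrite /= natrD mulrDl.
Qed.

Lemma count_edges_sym n (adj : rel 'I_n) (E : seq (nat * nat)) :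
  (forall a b : 'I_n, (adj a b : nat) =
     (count (pred1 (val a, val b)) E + count (pred1 (val b, val a)) E)%N) ->
  symmetric adj.
Proof.
move=> adjE a b; have : (adj a b : nat) = adj b a by rewrite !adjE addnC.
by case: (adj a b); case: (adj b a).
Qed.

Lemma laplacian_form_edges n (adj : rel 'I_n.+1) (E : seq (nat * nat))
    (x : 'rV[C]_n.+1) : all (fun e => (e.1 <= n) && (e.2 <= n))%N E ->
  (forall a b : 'I_n.+1, (adj a b : nat) =
     (count (pred1 (val a, val b)) E + count (pred1 (val b, val a)) E)%N) ->
  (x *m map_mx rc (laplacian R adj) *m x^t*) 0 0 =
  \sum_(e <- E) `|x 0 (inord e.1) - x 0 (inord e.2)| ^+ 2.
Proof.
move=> E_lt adjE; have adj_sym := count_edges_sym adjE.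
apply: (@mulfI _ 2); first by rewrite pnatr_eq0.
rewrite double_laplacian_form // mulr_natl mulr2n.
rewrite -{1}(sum_count_edges (fun a b => `|x 0 a - x 0 b| ^+ 2) E_lt).
under [X in _ + X]eq_bigr => e _ do rewrite distrC.
rewrite -(sum_count_edges (fun a b => `|x 0 b - x 0 a| ^+ 2) E_lt).
rewrite [X in _ + X]exchange_big -big_split /=; apply: eq_bigr => a _.
by rewrite -big_split /=; apply: eq_bigr => b _; rewrite adjE natrD mulrDl.
Qed.
End Laplacian.

Section PathSums.
Variable C : numClosedFieldType.
Implicit Type X : nat -> C.

Lemma parallelogramC (a b : C) :
  `|a - b| ^+ 2 + `|a + b| ^+ 2 = 2 * `|a| ^+ 2 + 2 * `|b| ^+ 2.
Proof. by rewrite !normCK rmorphB rmorphD /=; ring. Qed.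

Lemma path_sqr_norm_sum X m :
  \sum_(k < m) `|X k - X k.+1| ^+ 2 + \sum_(k < m) `|X k + X k.+1| ^+ 2
    + 2 * `|X 0%N| ^+ 2 + 2 * `|X m| ^+ 2 = 4 * \sum_(k < m.+1) `|X k| ^+ 2.
Proof.
elim: m => [|m IH]; first by rewrite !big_ord0 big_ord1; ring.
rewrite !(big_ord_recr m) (big_ord_recr m.+1) /= mulrDr -IH.
by rewrite (canRL (addrK _) (parallelogramC (X m) (X m.+1))); ring.
Qed.

Lemma norm_alternating X a b : (forall k, (a <= k < b)%N -> X k + X k.+1 = 0) ->
  forall k, (a <= k <= b)%N -> `|X k| = `|X a|.
Proof.
move=> alt; elim=> [|k IH]; first by rewrite leqn0 => /andP[/eqP ->].
case: (eqVneq k.+1 a) => [-> //| k1_neq_a] /andP[a_le_k1 k1_le_b].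
have a_le_k : (a <= k)%N by move: a_le_k1 k1_neq_a; lia.
have -> : X k.+1 = - X k by apply/eqP; rewrite -addr_eq0 addrC alt ?a_le_k.
by rewrite normrN; apply: IH; rewrite a_le_k ltnW.
Qed.

Lemma Ppp_form_gap X p s : (s < p)%N -> X p.+2 = - X s.+1 ->
  4 * \sum_(k < p.+3) `|X k| ^+ 2 - (\sum_(k < p.+1) `|X k - X k.+1| ^+ 2
      + `|X p.+2 - X s| ^+ 2 + `|X p.+2 - X s.+2| ^+ 2) =
  \sum_(k < p.+1 | (k != s :> nat) && (k != s.+1 :> nat)) `|X k + X k.+1| ^+ 2
    + 2 * `|X 0%N| ^+ 2 + 2 * `|X p.+1| ^+ 2 + 4 * `|X s.+1| ^+ 2.
Proof.
move=> s_lt_p X_u.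
have s_lt : (s < p.+1)%N by apply: ltnW.
have s1_lt : (s.+1 < p.+1)%N by [].
have edge_s : `|X p.+2 - X s| = `|X s + X s.+1|.
  by rewrite X_u -opprD normrN addrC.
have edge_s2 : `|X p.+2 - X s.+2| = `|X s.+1 + X s.+2|.
  by rewrite X_u -opprD normrN.
have split_s : \sum_(k < p.+1) `|X k + X k.+1| ^+ 2 =
    `|X s + X s.+1| ^+ 2 + `|X s.+1 + X s.+2| ^+ 2 +
    \sum_(k < p.+1 | (k != s :> nat) && (k != s.+1 :> nat)) `|X k + X k.+1| ^+ 2.
  rewrite (bigD1 (Ordinal s_lt)) //= (bigD1 (Ordinal s1_lt)) ?addrA //.
  by rewrite -val_eqE /= gtn_eqF.
rewrite edge_s edge_s2 (big_ord_recr p.+2) /= X_u normrN mulrDr.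
by rewrite -(path_sqr_norm_sum X p.+1) split_s; ring.
Qed.

Lemma Ppp_form_lt X p s : (s < p)%N -> X p.+2 = - X s.+1 ->
    (exists2 k, (k < p.+3)%N & X k != 0) ->
  \sum_(k < p.+1) `|X k - X k.+1| ^+ 2 + `|X p.+2 - X s| ^+ 2
    + `|X p.+2 - X s.+2| ^+ 2 < 4 * \sum_(k < p.+3) `|X k| ^+ 2.
Proof.
move=> s_lt_p X_u [k k_lt Xk_neq0].
rewrite -subr_gt0 Ppp_form_gap //.
set S := \sum_(i < p.+1 | _) _.
have S_ge0 : 0 <= S by apply: sumr_ge0 => i _; apply: exprn_ge0.
rewrite lt_def !addr_ge0 ?mulr_ge0 ?exprn_ge0 // andbT; apply: contra Xk_neq0.
rewrite !paddr_eq0 ?addr_ge0 ?mulr_ge0 ?exprn_ge0 // !mulf_eq0 !pnatr_eq0 /=.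
rewrite !orbb !normr_eq0 -!andbA => /and4P[/eqP S0 /eqP X0 /eqP Xp1 /eqP Xs1].
have alt i : (i < p.+1)%N -> i != s -> i != s.+1 -> X i + X i.+1 = 0.
  move=> i_lt i_neq_s i_neq_s1.
  apply/eqP; rewrite -normr_eq0 -sqrf_eq0; apply/eqP.
  apply: (psumr_eq0P _ S0 (i := Ordinal i_lt)) => [j _|]; first exact: exprn_ge0.
  by rewrite /= i_neq_s i_neq_s1.
rewrite -normr_eq0; apply/eqP.
have alt_left i : (0 <= i < s)%N -> X i + X i.+1 = 0.
  by move=> /andP[_ ?]; apply: alt; lia.
have [k_le_s | s_lt_k] := leqP k s.
  by rewrite (norm_alternating alt_left) ?X0 ?normr0.
have [-> | k_neq_s1] := eqVneq k s.+1; first by rewrite Xs1 normr0.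
have [-> | k_neq_u] := eqVneq k p.+2; first by rewrite X_u Xs1 oppr0 normr0.
have alt_right i : (s.+2 <= i < p.+1)%N -> X i + X i.+1 = 0.
  by move=> /andP[? ?]; apply: alt; lia.
rewrite (norm_alternating alt_right (k := k)); last by lia.
by rewrite -(norm_alternating alt_right (k := p.+1)) ?Xp1 ?normr0 //; lia.
Qed.
End PathSums.

(* With n = p.+3 and t = s.+1, the path v_1 ... v_(n-1) is 0 ... p.+1 and
   u is p.+2, so the edges u v_t and u v_(t+2) are (p.+2, s) and (p.+2, s.+2). *)
Definition path_edges (m : nat) : seq (nat * nat) :=
  [seq (k, k.+1) | k <- iota 0 m].

Definition Ppp_edges (p s : nat) : seq (nat * nat) :=
  path_edges p.+1 ++ [:: (p.+2, s); (p.+2, s.+2)].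

Lemma count_path_edges m a b :
  count (pred1 (a, b)) (path_edges m) = ((a < m) && (b == a.+1))%N.
Proof.
rewrite count_map (eq_count (a2 := fun k => (b == a.+1) && (k == a))); last first.
  move=> k /=; rewrite xpair_eqE.
  by case: (eqVneq k a) => [->|_]; rewrite ?andbF // andbT eq_sym.
case: eqVneq => _; last by rewrite andbF count_pred0.
by rewrite andbT (count_uniq_mem _ (iota_uniq 0 m)) mem_iota.
Qed.

Lemma Ppp_adj_count p s (a b : 'I_p.+3) : (s < p)%N ->
  (Ppp_adj p.+3 s.+1 a b : nat) =
  (count (pred1 (val a, val b)) (Ppp_edges p s)
     + count (pred1 (val b, val a)) (Ppp_edges p s))%N.
Proof.
move=> s_lt_p; rewrite !count_cat !count_path_edges /= /Ppp_adj /= !xpair_eqE.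
case: a b => [a a_lt] [b b_lt] /=.
by have [a_u|a_ne] := eqVneq a p.+2; have [b_u|b_ne] := eqVneq b p.+2; lia.
Qed.

Section PppLaplacian.
Variable R : realType.
Local Notation C := R[i].

Lemma Ppp_laplacian_form p s (x : 'rV[C]_p.+3) : (s < p)%N ->
  (x *m map_mx (real_complex R) (laplacian R (Ppp_adj p.+3 s.+1)) *m x^t*) 0 0 =
  \sum_(k < p.+1) `|x 0 (inord k) - x 0 (inord k.+1)| ^+ 2
    + `|x 0 (inord p.+2) - x 0 (inord s)| ^+ 2
    + `|x 0 (inord p.+2) - x 0 (inord s.+2)| ^+ 2.
Proof.
move=> s_lt_p; rewrite (@laplacian_form_edges _ _ _ (Ppp_edges p s)); last first.
- by move=> a b; apply: Ppp_adj_count.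
- rewrite all_cat; apply/andP; split; last by rewrite /=; lia.
  by apply/allP => e /mapP [k]; rewrite mem_iota => /andP[_ k_lt] -> /=; lia.
rewrite big_cat -addrA; congr (_ + _); last by rewrite big_cons big_seq1.
by rewrite big_map -[iota 0 p.+1]/(index_iota 0 p.+1) big_mkord.
Qed.

Lemma Ppp_laplacian_form_lt p s (x : 'rV[C]_p.+3) : (s < p)%N -> x != 0 ->
    x 0 (inord p.+2) + x 0 (inord s.+1) = 0 ->
  (x *m map_mx (real_complex R) (laplacian R (Ppp_adj p.+3 s.+1)) *m x^t*) 0 0
    < 4 * (x *m x^t*) 0 0.
Proof.
move=> s_lt_p x_neq0 x_orth; rewrite Ppp_laplacian_form //.
have -> : (x *m x^t*) 0 0 = \sum_(k < p.+3) `|x 0 (inord k)| ^+ 2.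
  by rewrite mxE; apply: eq_bigr => k _; rewrite !mxE normCK inord_val.
apply: (Ppp_form_lt (X := fun k => x 0 (inord k))) => //.
  by apply/eqP; rewrite -addr_eq0 x_orth.
have [k xk_neq0] : exists k, x 0 k != 0.
  apply/existsP; apply: contraR x_neq0; rewrite negb_exists => /forallP x0.
  by apply/eqP/rowP => k; rewrite mxE; apply/eqP; rewrite -[_ == _]negbK x0.
by exists k; rewrite ?inord_val.
Qed.
End PppLaplacian.

Theorem lemma4p3 (R : realType) (n t : nat) :
  (1 <= t)%N -> (t <= n - 3)%N ->
  (exists s : seq R, is_spectrum (laplacian R (Ppp_adj n t)) s) /\
  (forall s : seq R, is_spectrum (laplacian R (Ppp_adj n t)) s ->
     kth_largest 2 s < 4).
Proof.
move=> t_ge1 t_le.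
have [p [s [-> -> s_lt_p]]] : exists p s, [/\ n = p.+3, t = s.+1 & (s < p)%N].
  by exists (n - 3)%N, t.-1; split; lia.
set L := laplacian R (Ppp_adj p.+3 s.+1).
have L_sym : L^T = L.
  by apply/laplacian_sym/count_edges_sym => a b; apply: Ppp_adj_count.
split=> [|sp spec_sp]; first exact: realsym_spectrum.
apply: kth_largest2_lt.
  by have := size_char_poly L; rewrite spec_sp size_prod_XsubC => -[->].
pose f : 'cV[R[i]]_p.+3 := delta_mx (inord p.+2) 0 + delta_mx (inord s.+1) 0.
apply: (realsym_count_spectrum_ge_le1 (f := f) L_sym spec_sp) => x x_neq0 xf.
rewrite rmorph_nat; apply: Ppp_laplacian_form_lt => //.
by have := congr1 (fun y : 'M[R[i]]_1 => y 0 0) xf; rewrite mulmxDr -!colE !mxE.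
Qed.
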